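(* For every $g\ge1$ and every integer $c$ with $0\le c\le\lfloor g/2\rfloor$, the quantity \[ L_{g,p^c}=\prod_{i=1}^{g-2c}(p^i+(-1)^i)\cdot\prod_{i=1}^c(p^{4i-2}-1)\cdot\frac{\prod_{i=1}^g(p^{2i}-1)}{\prod_{i=1}^{2c}(p^{2i}-1)\prod_{i=1}^{g-2c}(p^{2i}-1)} \] is a polynomial in $p$ with coefficients in $\mathbb{Z}$, of degree $(g^2+4gc-8c^2+g-2c)/2$. Moreover, as $c$ ranges over $0\le c\le\lfloor g/2\rfloor$, this degree is minimal exactly for $c=0$ when $g$ is odd and exactly for $c=g/2$ when $g$ is even.
   Context: Here $p$ is regarded as an indeterminate (or a prime). *)

From HB Require Import structures.
From mathcomp Require Import all_boot all_order all_algebra.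
Set Implicit Arguments. Unset Strict Implicit. Unset Printing Implicit Defensive.
Import Order.TTheory GRing.Theory Num.Theory.
Local Open Scope ring_scope.

Definition Lnum (g c : nat) : {poly int} :=
  (\prod_(1 <= i < (g - 2 * c).+1) ('X^i + (-1) ^+ i)) *
  (\prod_(1 <= i < c.+1) ('X^(4 * i - 2) - 1)) *
  (\prod_(1 <= i < g.+1) ('X^(2 * i) - 1)).

Definition Lden (g c : nat) : {poly int} :=
  (\prod_(1 <= i < (2 * c).+1) ('X^(2 * i) - 1)) *
  (\prod_(1 <= i < (g - 2 * c).+1) ('X^(2 * i) - 1)).

Definition Ldeg (g c : nat) : int :=
  ((g%:Z ^+ 2 + 4 * g%:Z * c%:Z - 8 * c%:Z ^+ 2 + g%:Z - 2 * c%:Z) %/ 2)%Z.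

(* With q = p^2, L_{g,p^c} is prod_i (p^i + (-1)^i) * prod_i (p^(4i-2) - 1) times
   the Gaussian binomial [g choose 2c]_q, which is a polynomial in q by the q-Pascal
   recurrence.  Every factor is monic, so the degree of the quotient is
   deg(numerator) - deg(denominator) = g(g+1)/2 + c(2g - 4c - 1).  For 0 <= c <= g/2
   the term c(2g - 4c - 1) is 0 at c = 0, equals -c < 0 at c = g/2 (g even), and is
   positive otherwise; this locates the minimum. *)

From mathcomp Require Import all_boot all_order all_algebra.
From mathcomp Require Import zify ring.

Set Implicit Arguments.
Unset Strict Implicit.
Unset Printing Implicit Defensive.

Import Order.TTheory GRing.Theory Num.Theory.
Local Open Scope ring_scope.

Section GaussianBinomial.
Variables (R : comPzRingType) (q : R).

(* Up to the sign (-1)^n, this is the q-Pochhammer symbol (q; q)_n. *)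
Definition qfact (n : nat) : R := \prod_(1 <= i < n.+1) (q ^+ i - 1).

Definition qfalling (n k : nat) : R := \prod_(i < k) (q ^+ (n - i) - 1).

Fixpoint qbinom (n k : nat) : R :=
  match n, k with
  | _, 0 => 1
  | 0, _.+1 => 0
  | n'.+1, k'.+1 => qbinom n' k' + q ^+ k'.+1 * qbinom n' k'.+1
  end.

Lemma qfactS n : qfact n.+1 = qfact n * (q ^+ n.+1 - 1).
Proof. by rewrite /qfact big_nat_recr. Qed.

Lemma qfalling_gt n k : (n < k)%N -> qfalling n k = 0.
Proof.
move=> lt_nk; rewrite /qfalling (bigD1 (Ordinal lt_nk)) //=.
by rewrite subnn expr0 subrr mul0r.
Qed.

Lemma qfallingSS n k : qfalling n.+1 k.+1 = (q ^+ n.+1 - 1) * qfalling n k.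
Proof. by rewrite /qfalling big_ord_recl subn0. Qed.

Lemma qbinom_qfact n k : qbinom n k * qfact k = qfalling n k.
Proof.
elim: n k => [|n IH] [|k].
- by rewrite /qfact /qfalling big_geq // big_ord0 mulr1.
- by rewrite mul0r qfalling_gt.
- by rewrite /qfact /qfalling big_geq // big_ord0 mulr1.
rewrite /= mulrDl {1}qfactS mulrA IH -mulrA (IH k.+1) qfallingSS.
have [le_kn | lt_nk] := leqP k n; last first.
  by rewrite !qfalling_gt ?(leqW lt_nk) // !(mul0r, mulr0) addr0.
have -> : qfalling n k.+1 = qfalling n k * (q ^+ (n - k) - 1).
  by rewrite /qfalling big_ord_recr.
have -> : q ^+ n.+1 = q ^+ k.+1 * q ^+ (n - k) by rewrite -exprD; congr (_ ^+ _); lia.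
(* [ring] does not terminate if it sees the powers of q unabstracted. *)
move: (qfalling n k) (q ^+ k.+1) (q ^+ (n - k)) => a b c.
ring.
Qed.

Lemma qfalling_qfact n k : (k <= n)%N -> qfalling n k * qfact (n - k) = qfact n.
Proof.
elim: k => [|k IH] le_kn; first by rewrite /qfalling big_ord0 mul1r subn0.
rewrite /qfalling big_ord_recr /= -/(qfalling n k) -mulrA -(IH (ltnW le_kn)).
have -> : (n - k = (n - k.+1).+1)%N by lia.
by rewrite qfactS [_ * qfact _]mulrC.
Qed.

Lemma qbinom_qfactM n k : (k <= n)%N -> qbinom n k * qfact k * qfact (n - k) = qfact n.
Proof. by move=> le_kn; rewrite qbinom_qfact qfalling_qfact. Qed.

End GaussianBinomial.

Section MonicProducts.
Variable R : nzRingType.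

Lemma size_prod_monic (I : Type) (r : seq I) (P : pred I) (F : I -> {poly R}) :
  (forall i, P i -> F i \is monic) ->
  size (\prod_(i <- r | P i) F i) = (\sum_(i <- r | P i) (size (F i)).-1)%N.+1.
Proof.
move=> monF; elim: r => [|i r IHr]; first by rewrite !big_nil size_poly1.
rewrite !big_cons; case: ifP => // Pi.
rewrite size_monicM ?monF ?monic_neq0 ?monic_prod // IHr addnS /= -addSn.
by rewrite prednK // size_poly_gt0 monic_neq0 ?monF.
Qed.

Lemma size_monic_quotient (P D N : {poly R}) :
  D \is monic -> N != 0 -> P * D = N -> ((size P).-1 + (size D).-1 = (size N).-1)%N.
Proof.
move=> monD nzN defN; have nzP : P != 0 by apply: contraNneq nzN => P0; rewrite -defN P0 mul0r.
have := size_poly_gt0 P; have := size_poly_gt0 D.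
rewrite -defN size_Mmonic // nzP monic_neq0 //; lia.
Qed.

Lemma size_prod_XnaddC (m n : nat) (d : nat -> nat) (a : nat -> R) :
  (forall i, (m <= i < n)%N -> (0 < d i)%N) ->
  size (\prod_(m <= i < n) ('X^(d i) + (a i)%:P)) = (\sum_(m <= i < n) d i)%N.+1.
Proof.
move=> d_gt0; rewrite !big_nat size_prod_monic; last by move=> i /d_gt0; apply: monicXnaddC.
by congr _.+1; apply: eq_bigr => i /d_gt0 di_gt0; rewrite size_XnaddC.
Qed.

Lemma monic_prod_XnaddC (m n : nat) (d : nat -> nat) (a : nat -> R) :
  (forall i, (m <= i < n)%N -> (0 < d i)%N) ->
  \prod_(m <= i < n) ('X^(d i) + (a i)%:P) \is monic.
Proof. by move=> d_gt0; rewrite big_nat monic_prod // => i /d_gt0; apply: monicXnaddC. Qed.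

Lemma prod_Xn_sub1E (m n : nat) (d : nat -> nat) :
  \prod_(m <= i < n) ('X^(d i) - 1 : {poly R}) = \prod_(m <= i < n) ('X^(d i) + (-1)%:P).
Proof. by rewrite polyCN polyC1. Qed.

Lemma prod_Xn_add_signE (m n : nat) :
  \prod_(m <= i < n) ('X^i + (-1) ^+ i : {poly R}) =
  \prod_(m <= i < n) ('X^i + ((-1) ^+ i)%:P).
Proof. by apply: eq_bigr => i _; rewrite rmorphXn /= polyCN polyC1. Qed.

Lemma monic_prod_Xn_sub1 (m n : nat) (d : nat -> nat) :
  (forall i, (m <= i < n)%N -> (0 < d i)%N) ->
  \prod_(m <= i < n) ('X^(d i) - 1 : {poly R}) \is monic.
Proof. by rewrite prod_Xn_sub1E; apply: monic_prod_XnaddC. Qed.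

Lemma size_prod_Xn_sub1 (m n : nat) (d : nat -> nat) :
  (forall i, (m <= i < n)%N -> (0 < d i)%N) ->
  size (\prod_(m <= i < n) ('X^(d i) - 1 : {poly R})) = (\sum_(m <= i < n) d i)%N.+1.
Proof. by rewrite prod_Xn_sub1E; apply: size_prod_XnaddC. Qed.

Lemma monic_prod_Xn_add_sign (m : nat) :
  \prod_(1 <= i < m.+1) ('X^i + (-1) ^+ i : {poly R}) \is monic.
Proof. by rewrite prod_Xn_add_signE monic_prod_XnaddC // => i /andP[]. Qed.

Lemma size_prod_Xn_add_sign (m : nat) :
  size (\prod_(1 <= i < m.+1) ('X^i + (-1) ^+ i : {poly R})) =
  (\sum_(1 <= i < m.+1) i)%N.+1.
Proof. by rewrite prod_Xn_add_signE size_prod_XnaddC // => i /andP[]. Qed.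

End MonicProducts.

Lemma double_sum_id m : (2 * \sum_(1 <= i < m.+1) i = m * m.+1)%N.
Proof.
elim: m => [|m IHm]; first by rewrite big_geq.
rewrite big_nat_recr //= mulnDr IHm; lia.
Qed.

Lemma sum_double_id m : (\sum_(1 <= i < m.+1) (2 * i) = m * m.+1)%N.
Proof.
elim: m => [|m IHm]; first by rewrite big_geq.
rewrite big_nat_recr //= IHm; lia.
Qed.

Lemma sum_double_odd m : (\sum_(1 <= i < m.+1) (4 * i - 2) = 2 * m * m)%N.
Proof.
elim: m => [|m IHm]; first by rewrite big_geq.
rewrite big_nat_recr //= IHm; lia.
Qed.

Section SquareVariable.
Variable R : comNzRingType.

Lemma qfact_X2 n : qfact ('X^2 : {poly R}) n = \prod_(1 <= i < n.+1) ('X^(2 * i) - 1).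
Proof. by apply: eq_bigr => i _; rewrite exprM. Qed.

Lemma monic_qfact_X2 n : qfact ('X^2 : {poly R}) n \is monic.
Proof. by rewrite qfact_X2 monic_prod_Xn_sub1 // => i /andP[]; lia. Qed.

Lemma size_qfact_X2 n : size (qfact ('X^2 : {poly R}) n) = (n * n.+1)%N.+1.
Proof.
by rewrite qfact_X2 size_prod_Xn_sub1 ?sum_double_id // => i /andP[]; lia.
Qed.

End SquareVariable.

Lemma Lnum_qfact g c :
  Lnum g c = \prod_(1 <= i < (g - 2 * c).+1) ('X^i + (-1) ^+ i) *
             \prod_(1 <= i < c.+1) ('X^(4 * i - 2) - 1) * qfact 'X^2 g.
Proof. by rewrite /Lnum qfact_X2. Qed.

Lemma Lden_qfact g c : Lden g c = qfact 'X^2 (2 * c) * qfact 'X^2 (g - 2 * c).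
Proof. by rewrite /Lden !qfact_X2. Qed.

Lemma Lnum_monic g c : Lnum g c \is monic.
Proof.
rewrite Lnum_qfact !monicMl ?monic_prod_Xn_add_sign ?monic_qfact_X2 //.
by rewrite monic_prod_Xn_sub1 // => i /andP[]; lia.
Qed.

Lemma Lden_monic g c : Lden g c \is monic.
Proof. by rewrite Lden_qfact monicMl monic_qfact_X2. Qed.

Lemma size_Lnum g c :
  size (Lnum g c) = (\sum_(1 <= i < (g - 2 * c).+1) i + 2 * c * c + g * g.+1)%N.+1.
Proof.
have d4_gt0 i : (1 <= i < c.+1)%N -> (0 < 4 * i - 2)%N by case/andP; lia.
have monA := monic_prod_Xn_add_sign int (g - 2 * c).
have monB := @monic_prod_Xn_sub1 int _ _ _ d4_gt0.
rewrite Lnum_qfact size_monicM ?monicMl ?monic_neq0 ?monic_qfact_X2 //.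
rewrite size_monicM ?monic_neq0 // size_prod_Xn_add_sign size_prod_Xn_sub1 //.
by rewrite sum_double_odd size_qfact_X2; lia.
Qed.

Lemma size_Lden g c :
  size (Lden g c) = (2 * c * (2 * c).+1 + (g - 2 * c) * (g - 2 * c).+1)%N.+1.
Proof.
rewrite Lden_qfact size_monicM ?monic_qfact_X2 ?(monic_neq0 (monic_qfact_X2 _ _)) //.
by rewrite !size_qfact_X2 addSn addnS.
Qed.

Lemma Lnum_Lden_quotient g c : (2 * c <= g)%N ->
  \prod_(1 <= i < (g - 2 * c).+1) ('X^i + (-1) ^+ i) *
  \prod_(1 <= i < c.+1) ('X^(4 * i - 2) - 1) * qbinom 'X^2 g (2 * c) * Lden g c
  = Lnum g c.
Proof.
move=> le_2c_g; rewrite Lden_qfact Lnum_qfact -(qbinom_qfactM 'X^2 le_2c_g).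
by rewrite !mulrA.
Qed.

Lemma double_half_mulnS n : (2 * (n * n.+1)./2 = n * n.+1)%N.
Proof. rewrite -[RHS]odd_double_half oddM /= andbN add0n; lia. Qed.

Lemma LdegE g c :
  Ldeg g c = ((g * g.+1)./2)%:Z + c%:Z * (2 * g%:Z - 4 * c%:Z - 1).
Proof.
have half_gg1 := double_half_mulnS g.
rewrite /Ldeg; set d := RHS.
have -> : g%:Z ^+ 2 + 4 * g%:Z * c%:Z - 8 * c%:Z ^+ 2 + g%:Z - 2 * c%:Z = d * 2.
  rewrite /d; nia.
by rewrite mulzK.
Qed.

Lemma size_Lnum_Lden_quotient (P : {poly int}) g c : (2 * c <= g)%N ->
  P * Lden g c = Lnum g c -> ((size P).-1)%:Z = Ldeg g c.
Proof.
move=> le_2c_g defP.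
have := size_monic_quotient (Lden_monic g c) (monic_neq0 (Lnum_monic g c)) defP.
rewrite size_Lnum size_Lden LdegE /=.
have := double_half_mulnS g; have := double_sum_id (g - 2 * c).
have [m ->] : exists m, g = (m + 2 * c)%N by exists (g - 2 * c)%N; rewrite subnK.
rewrite addnK.
move: (size P).-1 (\sum_(1 <= i < m.+1) i)%N ((m + 2 * c) * (m + 2 * c).+1)./2%N.
move=> d s h; lia.
Qed.

Lemma Ldeg_lt_odd h c : (0 < c <= h)%N -> Ldeg h.*2.+1 0 < Ldeg h.*2.+1 c.
Proof. rewrite !LdegE mul0r addr0 ltrDl; nia. Qed.

Lemma Ldeg_lt_even h c : (c < h)%N -> Ldeg h.*2 h < Ldeg h.*2 c.
Proof. rewrite !LdegE ltrD2l; nia. Qed.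

Theorem lemma3p2 (g : nat) : (1 <= g)%N ->
  (forall c : nat, (c <= g./2)%N ->
     exists P : {poly int},
       P * Lden g c = Lnum g c /\ ((size P).-1)%:Z = Ldeg g c)
  /\
  (forall c : nat, (c <= g./2)%N ->
     c != (if odd g then 0%N else g./2) ->
     Ldeg g (if odd g then 0%N else g./2) < Ldeg g c).
Proof.
move=> _; split=> c le_c_half.
  have le_2c_g : (2 * c <= g)%N by lia.
  have defP := Lnum_Lden_quotient le_2c_g.
  by eexists; split; [exact: defP | exact: size_Lnum_Lden_quotient defP].
move: le_c_half; have := odd_double_half g; set h := g./2; clearbody h.
case: (odd g) => /= <- le_c_h ne_c.
- by apply: Ldeg_lt_odd; rewrite lt0n ne_c.
- by apply: Ldeg_lt_even; rewrite ltn_neqAle ne_c.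
Qed.
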